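(* Let $\mathcal{D}(\rho)=p_0\rho+p_1X\rho X+p_2Y\rho Y+p_3Z\rho Z$ and $\mathcal{E}(\rho)=q_0\rho+q_1X\rho X+q_2Y\rho Y+q_3Z\rho Z$ be two arbitrary single-qubit quantum Pauli channels, where $(p_i)$ and $(q_i)$ are probability vectors. The entanglement-assisted classical communication capacity of $\mathcal{D}$ and $\mathcal{E}$ over a quantum trajectory is $$C_{\text{E,Q}}=2+H(\alpha)+A_0\log_2A_0+\sum_{k=1}^3 A_k^+\log_2A_k^++\sum_{k=1}^3A_k^-\log_2A_k^-,$$ where $A_0=p_0q_0+p_1q_1+p_2q_2+p_3q_3$, $A_1^+=p_0q_1+p_1q_0$, $A_2^+=p_0q_2+p_2q_0$, $A_3^+=p_0q_3+p_3q_0$, $A_1^-=p_2q_3+p_3q_2$, $A_2^-=p_3q_1+p_1q_3$, $A_3^-=p_1q_2+p_2q_1$, $\alpha=A_0+A_1^++A_2^++A_3^+$, and $H(\alpha)=-\alpha\log_2\alpha-(1-\alpha)\log_2(1-\alpha)$ is the binary entropy.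
   Context: $X,Y,Z$ are the Pauli matrices, $\sigma_0=I,\sigma_1=X,\sigma_2=Y,\sigma_3=Z$, $|\pm\rangle=(|0\rangle\pm|1\rangle)/\sqrt2$, and $0\log_2 0=0$. For a Pauli channel $\mathcal{N}(\rho)=\sum_{i=0}^3 r_i\sigma_i\rho\sigma_i$, its entanglement-assisted classical capacity (superdense-coding capacity with a pre-shared EPR pair, equiprobable inputs) is defined as $C_E(\mathcal{N})=2+\sum_i r_i\log_2 r_i$. Quantum trajectory (quantum switch): with $D_i=\sqrt{p_i}\sigma_i$, $E_j=\sqrt{q_j}\sigma_j$, the channel acting on the data qubit $\rho$ and a control qubit $\omega=|+\rangle\langle+|$ is $\mathcal{S}_\omega(\mathcal{D},\mathcal{E})(\rho)=\sum_{i,j}W_{i,j}(\rho\otimes\omega)W_{i,j}^\dagger$ with $W_{i,j}=E_jD_i\otimes|0\rangle\langle0|+D_iE_j\otimes|1\rangle\langle1|$. Since each pair of Pauli matrices commutes or anticommutes, the output is of the form $p_{+}\,\mathcal{S}_{+}(\rho)\otimes|+\rangle\langle+|+p_{-}\,\mathcal{S}_{-}(\rho)\otimes|-\rangle\langle-|$, where the pairs $(i,j)$ with commuting $\sigma_i,\sigma_j$ contribute to the $|+\rangle$ branch and anticommuting pairs to the $|-\rangle$ branch, $p_\pm$ are the total weights of the branches and $\mathcal{S}_\pm$ are the normalized (Pauli) channels of each branch. Measuring the control in the basis $\{|+\rangle,|-\rangle\}$, the capacity over the quantum trajectory is defined as $C_{\text{E,Q}}=p_{+}C_E(\mathcal{S}_{+})+p_{-}C_E(\mathcal{S}_{-})$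 (a branch with zero probability contributes zero). *)

From HB Require Import structures.
From mathcomp Require Import all_boot all_order all_algebra all_field.
From mathcomp Require Import reals exp.
Set Implicit Arguments. Unset Strict Implicit. Unset Printing Implicit Defensive.
Import Order.TTheory GRing.Theory Num.Theory.
Local Open Scope ring_scope.

Definition pauli (i : 'I_4) : 'M[algC]_2 :=
  match val i with
  | 0%N => \matrix_(a < 2, b < 2) (if a == b then 1 else 0)
  | 1%N => \matrix_(a < 2, b < 2) (if a == b then 0 else 1)
  | 2%N => \matrix_(a < 2, b < 2)
             (if a == b then 0 else if (val a == 0%N) then - 'i else 'i)
  | _ => \matrix_(a < 2, b < 2)
             (if a == b then (if val a == 0%N then 1 else -1) else 0)
  end.

Definition pauli_commute (i j : 'I_4) : bool :=
  pauli i *m pauli j == pauli j *m pauli i.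

(* index k of the Pauli matrix to which E_j D_i ~ sigma_j sigma_i is
   proportional (sigma_j sigma_i = c sigma_k, equivalently
   sigma_j sigma_i sigma_k is a scalar matrix since sigma_k^2 = I) *)
Definition pauli_prod_index (i j : 'I_4) : 'I_4 :=
  odflt ord0 [pick k : 'I_4 | is_scalar_mx (pauli j *m pauli i *m pauli k)].

Definition xlog2x {R : realType} (x : R) : R :=
  if x == 0 then 0 else x * (ln x / ln 2).

Definition binH {R : realType} (a : R) : R := - xlog2x a - xlog2x (1 - a).

(* entanglement-assisted capacity of the Pauli channel with weights r *)
Definition C_E {R : realType} (r : 'I_4 -> R) : R :=
  2 + \sum_(i < 4) xlog2x (r i).

Definition is_prob_vec {R : realType} (p : 'I_4 -> R) : Prop :=
  (forall i, 0 <= p i) /\ \sum_(i < 4) p i = 1.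

(* Quantum switch of D (weights p, Kraus D_i = sqrt p_i sigma_i) and
   E (weights q): branch b = true is the |+> branch (commuting pairs),
   b = false the |-> branch (anticommuting pairs). The Kraus term
   W_ij contributes p_i q_j (sigma_j sigma_i) rho (sigma_j sigma_i)^dagger,
   and sigma_j sigma_i = c sigma_k with |c| = 1. *)
Definition branch_weight {R : realType} (p q : 'I_4 -> R) (b : bool) : R :=
  \sum_(i < 4) \sum_(j < 4 | pauli_commute i j == b) p i * q j.

Definition branch_unnorm {R : realType} (p q : 'I_4 -> R) (b : bool)
  (k : 'I_4) : R :=
  \sum_(i < 4) \sum_(j < 4 | (pauli_commute i j == b)
                              && (pauli_prod_index i j == k)) p i * q j.

Definition branch_capacity {R : realType} (p q : 'I_4 -> R) (b : bool) : R :=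
  let pb := branch_weight p q b in
  if pb == 0 then 0
  else pb * C_E (fun k => branch_unnorm p q b k / pb).

Definition C_EQ {R : realType} (p q : 'I_4 -> R) : R :=
  branch_capacity p q true + branch_capacity p q false.

From HB Require Import structures.
From mathcomp Require Import all_boot all_order all_algebra all_field.
From mathcomp Require Import reals exp.
From mathcomp Require Import ring lra.
Set Implicit Arguments.
Unset Strict Implicit.
Unset Printing Implicit Defensive.

Import Order.TTheory GRing.Theory Num.Theory.
Local Open Scope ring_scope.

(* Up to a phase, Pauli matrices multiply like the Klein four-group, and two
   of them commute iff one is the identity or they are equal.  So the pair
   (i, j) of Kraus operators of D and E contributes p_i q_j to the Pauli weight
   of index "i xor j" in the |+> branch when sigma_i, sigma_j commute and in
   the |-> branch otherwise: the unnormalised weights are (A0, A1+, A2+, A3+)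
   and (0, A1-, A2-, A3-).  The grouping rule
     w C_E(r / w) = 2 w + sum_k r_k log2 r_k - w log2 w,   w = sum_k r_k,
   then gives the formula, the two terms -w log2 w combining into H(alpha)
   because the branch probabilities are alpha and 1 - alpha. *)

Definition mx2 {T : Type} (a b c d : T) : 'M[T]_2 :=
  \matrix_(i < 2, j < 2)
    if val i == 0%N then (if val j == 0%N then a else b)
    else (if val j == 0%N then c else d).

Section MatrixTwo.
Variable K : pzRingType.
Implicit Types a b c d e f g h x : K.

Lemma mul_mx2 a b c d e f g h :
  mx2 a b c d *m mx2 e f g h =
  mx2 (a * e + b * g) (a * f + b * h) (c * e + d * g) (c * f + d * h).
Proof.
apply/matrixP => i j; rewrite !mxE !big_ord_recl big_ord0 !mxE /=.
by case: i => [[|[|//]] ?]; case: j => [[|[|//]] ?] /=; rewrite addr0.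
Qed.

Lemma eq_mx2 a b c d e f g h :
  (mx2 a b c d == mx2 e f g h) = [&& a == e, b == f, c == g & d == h].
Proof.
apply/eqP/and4P => [/matrixP eq_ij | [/eqP-> /eqP-> /eqP-> /eqP->]] //.
have := eq_ij ord0 ord0; have := eq_ij ord0 ord_max.
have := eq_ij ord_max ord0; have := eq_ij ord_max ord_max.
by rewrite !mxE /= => -> -> -> ->; rewrite !eqxx.
Qed.

Lemma scalar_mx2 a : a%:M = mx2 a 0 0 a :> 'M[K]_2.
Proof.
apply/matrixP => i j; rewrite !mxE.
by case: i => [[|[|//]] ?]; case: j => [[|[|//]] ?].
Qed.

Lemma is_scalar_mx2 a b c d :
  is_scalar_mx (mx2 a b c d) = [&& b == 0, c == 0 & a == d].
Proof.
apply/is_scalar_mxP/and3P => [[x /eqP] | [/eqP-> /eqP-> /eqP->]].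
  by rewrite scalar_mx2 eq_mx2 => /and4P[/eqP-> -> -> /eqP->].
by exists d; rewrite scalar_mx2.
Qed.

Lemma scale_mx2 x a b c d : x *: mx2 a b c d = mx2 (x * a) (x * b) (x * c) (x * d).
Proof.
apply/matrixP => i j; rewrite !mxE.
by case: i => [[|[|//]] ?]; case: j => [[|[|//]] ?].
Qed.

End MatrixTwo.

Lemma is_scalar_mxZ (F : fieldType) n (c : F) (A : 'M[F]_n) :
  c != 0 -> is_scalar_mx (c *: A) = is_scalar_mx A.
Proof.
move=> c_neq0; apply/is_scalar_mxP/is_scalar_mxP => [[a cA] | [a ->]].
  by exists (c^-1 * a); rewrite -scale_scalar_mx -cA scalerK.
by exists (c * a); rewrite scale_scalar_mx.
Qed.

Section PauliMatrices.
Variable C : numClosedFieldType.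

Definition pauli_mx (n : nat) : 'M[C]_2 :=
  match n with
  | 0%N => mx2 1 0 0 1
  | 1%N => mx2 0 1 1 0
  | 2%N => mx2 0 (- 'i) 'i 0
  | _ => mx2 1 0 0 (-1)
  end.

Definition pauli_commute_nat (i j : nat) : bool := [|| i == 0%N, j == 0%N | i == j].

(* sigma_j sigma_i = pauli_phase i j * sigma_(pauli_prod_nat i j): for distinct
   i, j in {1, 2, 3} the product is the remaining Pauli matrix, of index
   6 - i - j, with phase -i when j follows i cyclically. *)
Definition pauli_prod_nat (i j : nat) : nat :=
  if i == 0%N then j else if j == 0%N then i else if i == j then 0%N
  else (6 - i - j)%N.

Definition pauli_phase (i j : nat) : C :=
  if pauli_commute_nat i j then 1 else if j == (i %% 3).+1 then - 'i else 'i.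

(* The entries lie in {0, +-1, +-i}; [x == - y] is turned into [- x == y] so
   that [eqNr] decides it. *)
Ltac simpl_mx2_entries :=
  rewrite ?(mul0r, mulr0, mul1r, mulr1, add0r, addr0, mulrN, mulNr, opprK,
            oppr0, mulCii) ?(esym (eqr_oppLR _ _)) ?opprK
          ?(eqxx, eqNr, oppr_eq0, oner_eq0, negbTE (@neq0Ci C)).

Lemma pauli_mx_commute (i j : 'I_4) :
  (pauli_mx i *m pauli_mx j == pauli_mx j *m pauli_mx i) = pauli_commute_nat i j.
Proof.
case: i => [[|[|[|[|//]]]] ?]; case: j => [[|[|[|[|//]]]] ?];
by rewrite /pauli_commute_nat /= !mul_mx2 eq_mx2; simpl_mx2_entries.
Qed.

Lemma pauli_prod_nat_lt4 (i j : 'I_4) : (pauli_prod_nat i j < 4)%N.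
Proof. by case: i => [[|[|[|[|//]]]] ?]; case: j => [[|[|[|[|//]]]] ?]. Qed.

Lemma pauli_phase_neq0 (i j : nat) : pauli_phase i j != 0.
Proof.
by rewrite /pauli_phase; case: ifP => _; [|case: ifP => _];
  rewrite ?oppr_eq0 ?oner_eq0 ?neq0Ci.
Qed.

Lemma pauli_mx_mul (i j : 'I_4) :
  pauli_mx j *m pauli_mx i = pauli_phase i j *: pauli_mx (pauli_prod_nat i j).
Proof.
apply/eqP; case: i => [[|[|[|[|//]]]] ?]; case: j => [[|[|[|[|//]]]] ?];
by rewrite /pauli_phase /pauli_commute_nat /pauli_prod_nat /=
  mul_mx2 scale_mx2 eq_mx2; simpl_mx2_entries.
Qed.

Lemma pauli_mx_mul_scalar (m : nat) (k : 'I_4) : (m < 4)%N ->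
  is_scalar_mx (pauli_mx m *m pauli_mx k) = (m == k).
Proof.
case: m => [|[|[|[|//]]]] _; case: k => [[|[|[|[|//]]]] ?];
by rewrite /= mul_mx2 is_scalar_mx2; simpl_mx2_entries.
Qed.

Lemma pauli_mx_prod_scalar (i j k : 'I_4) :
  is_scalar_mx (pauli_mx j *m pauli_mx i *m pauli_mx k) = (pauli_prod_nat i j == k).
Proof.
rewrite pauli_mx_mul -scalemxAl is_scalar_mxZ ?pauli_phase_neq0 //.
exact/pauli_mx_mul_scalar/pauli_prod_nat_lt4.
Qed.

End PauliMatrices.

Lemma pauliE (i : 'I_4) : pauli i = pauli_mx algC i.
Proof.
case: i => [[|[|[|[|//]]]] ?]; apply/matrixP => a b; rewrite !mxE /=;
by case: a => [[|[|//]] ?]; case: b => [[|[|//]] ?].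
Qed.

Lemma pauli_commuteE (i j : 'I_4) : pauli_commute i j = pauli_commute_nat i j.
Proof. by rewrite /pauli_commute !pauliE pauli_mx_commute. Qed.

Lemma pauli_prod_indexE (i j : 'I_4) :
  val (pauli_prod_index i j) = pauli_prod_nat i j.
Proof.
rewrite /pauli_prod_index; case: pickP => [k | no_scalar].
  by rewrite !pauliE pauli_mx_prod_scalar => /eqP.
have := no_scalar (Ordinal (pauli_prod_nat_lt4 i j)).
by rewrite !pauliE pauli_mx_prod_scalar eqxx.
Qed.

Lemma sum_ord4 (V : nmodType) (F : 'I_4 -> V) :
  \sum_(i < 4) F i = F ord0 + F (inord 1) + F (inord 2) + F (inord 3).
Proof.
rewrite !big_ord_recr big_ord0 /= add0r.
by congr (_ + _ + _ + _); congr F; apply/val_inj; rewrite /= ?inordK.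
Qed.

Section Entropy.
Variable R : realType.

Lemma xlog2x0 : xlog2x (0 : R) = 0.
Proof. by rewrite /xlog2x eqxx. Qed.

Lemma xlog2x_div (s a : R) : 0 < s -> 0 <= a ->
  s * xlog2x (a / s) = xlog2x a - a * (ln s / ln 2).
Proof.
move=> s_gt0 a_ge0; rewrite /xlog2x.
have [->|a_neq0] := eqVneq a 0; first by rewrite mul0r eqxx mulr0 mul0r subr0.
have a_gt0 : 0 < a by rewrite lt_def a_neq0.
have ln2_neq0 : ln (2 : R) != 0 by rewrite gt_eqF // ln_gt0 // ltr1n.
rewrite mulf_eq0 invr_eq0 (negbTE a_neq0) gt_eqF //= ln_div ?posrE //.
by field; rewrite ln2_neq0 gt_eqF.
Qed.

Lemma scaled_capacityE (r : 'I_4 -> R) (s : R) :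
  (forall k, 0 <= r k) -> s = \sum_k r k ->
  (if s == 0 then 0 else s * C_E (fun k => r k / s))
  = 2 * s + \sum_k xlog2x (r k) - xlog2x s.
Proof.
move=> r_ge0 s_sum; have [s0 | s_neq0] := eqVneq s 0.
  have r0 k : r k = 0.
    by apply: (@psumr_eq0P _ _ xpredT r (fun k _ => r_ge0 k)); rewrite -?s_sum.
  rewrite s0 xlog2x0 big1 => [|k _]; last by rewrite r0 xlog2x0.
  by rewrite mulr0 addr0 subr0.
have s_gt0 : 0 < s by rewrite lt_def s_neq0 s_sum sumr_ge0.
rewrite /C_E mulrDr mulr_sumr (eq_bigr _ (fun k _ => xlog2x_div s_gt0 (r_ge0 k))).
rewrite sumrB -mulr_suml -s_sum {3}/xlog2x (negbTE s_neq0).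
by rewrite mulrC; lra.
Qed.

End Entropy.

Section Branches.
Variables (R : realType) (p q : 'I_4 -> R).

Lemma branch_weightE b : branch_weight p q b = \sum_k branch_unnorm p q b k.
Proof.
rewrite /branch_unnorm exchange_big /=; apply: eq_bigr => i _.
exact: (partition_big (pauli_prod_index i) xpredT).
Qed.

Lemma branch_weight_sum :
  branch_weight p q true + branch_weight p q false = (\sum_i p i) * (\sum_j q j).
Proof.
rewrite /branch_weight -big_split mulr_suml; apply: eq_bigr => i _ /=.
rewrite mulr_sumr [RHS](bigID (pauli_commute i)) /=.
by congr (_ + _); apply: eq_bigl => j; case: pauli_commute.
Qed.

Lemma branch_unnorm_ge0 b k :
  (forall i, 0 <= p i) -> (forall j, 0 <= q j) -> 0 <= branch_unnorm p q b k.
Proof. by move=> p_ge0 q_ge0; do 2!apply: sumr_ge0 => ? _; apply: mulr_ge0. Qed.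

Lemma branch_unnormE b (k : 'I_4) :
  branch_unnorm p q b k =
  \sum_(i < 4) \sum_(j < 4 | (pauli_commute_nat i j == b)
                             && (pauli_prod_nat i j == k)) p i * q j.
Proof.
apply: eq_bigr => i _; apply: eq_bigl => j.
by rewrite pauli_commuteE -val_eqE pauli_prod_indexE.
Qed.

Lemma branch_unnorm_commuting :
  [/\ branch_unnorm p q true ord0 =
        p ord0 * q ord0 + p (inord 1) * q (inord 1)
        + p (inord 2) * q (inord 2) + p (inord 3) * q (inord 3),
      branch_unnorm p q true (inord 1) =
        p ord0 * q (inord 1) + p (inord 1) * q ord0,
      branch_unnorm p q true (inord 2) =
        p ord0 * q (inord 2) + p (inord 2) * q ord0
    & branch_unnorm p q true (inord 3) =
        p ord0 * q (inord 3) + p (inord 3) * q ord0].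
Proof.
split; rewrite branch_unnormE; under eq_bigr do rewrite big_mkcond;
  rewrite !sum_ord4 ?inordK // /pauli_commute_nat /pauli_prod_nat /=; ring.
Qed.

Lemma branch_unnorm_anticommuting :
  [/\ branch_unnorm p q false ord0 = 0,
      branch_unnorm p q false (inord 1) =
        p (inord 2) * q (inord 3) + p (inord 3) * q (inord 2),
      branch_unnorm p q false (inord 2) =
        p (inord 3) * q (inord 1) + p (inord 1) * q (inord 3)
    & branch_unnorm p q false (inord 3) =
        p (inord 1) * q (inord 2) + p (inord 2) * q (inord 1)].
Proof.
split; rewrite branch_unnormE; under eq_bigr do rewrite big_mkcond;
  rewrite !sum_ord4 ?inordK // /pauli_commute_nat /pauli_prod_nat /=; ring.
Qed.

Lemma C_EQE : is_prob_vec p -> is_prob_vec q ->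
  C_EQ p q = 2 + binH (\sum_k branch_unnorm p q true k)
             + \sum_k xlog2x (branch_unnorm p q true k)
             + \sum_k xlog2x (branch_unnorm p q false k).
Proof.
move=> [p_ge0 sum_p] [q_ge0 sum_q].
have u_ge0 b k := branch_unnorm_ge0 b k p_ge0 q_ge0.
have := branch_weight_sum; rewrite sum_p sum_q mulr1 => weight_sum.
rewrite /C_EQ /branch_capacity /=.
rewrite !(scaled_capacityE (u_ge0 _) (branch_weightE _)) /binH.
have -> : branch_weight p q false = 1 - branch_weight p q true by lra.
rewrite branch_weightE; lra.
Qed.

End Branches.

Theorem proposition2 (R : realType) (p q : 'I_4 -> R) :
  is_prob_vec p -> is_prob_vec q ->
  let p0 := p ord0 in let p1 := p (inord 1) in
  let p2 := p (inord 2) in let p3 := p (inord 3) in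
  let q0 := q ord0 in let q1 := q (inord 1) in
  let q2 := q (inord 2) in let q3 := q (inord 3) in
  let A0 := p0 * q0 + p1 * q1 + p2 * q2 + p3 * q3 in
  let A1p := p0 * q1 + p1 * q0 in
  let A2p := p0 * q2 + p2 * q0 in
  let A3p := p0 * q3 + p3 * q0 in
  let A1m := p2 * q3 + p3 * q2 in
  let A2m := p3 * q1 + p1 * q3 in
  let A3m := p1 * q2 + p2 * q1 in
  let alpha := A0 + A1p + A2p + A3p in
  C_EQ p q = 2 + binH alpha + xlog2x A0
             + (xlog2x A1p + xlog2x A2p + xlog2x A3p)
             + (xlog2x A1m + xlog2x A2m + xlog2x A3m).
Proof.
move=> p_prob q_prob; cbv zeta.
rewrite C_EQE // !sum_ord4.
have [-> -> -> ->] := branch_unnorm_commuting p q.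
have [-> -> -> ->] := branch_unnorm_anticommuting p q.
by rewrite xlog2x0; ring.
Qed.
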